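(* Let $n\ge2$ and let $E$ be a non-empty subset of $\bar\Delta^{(n)}$. There exists a generalized $n$-system $\mathbf{P}$ on $[1,\infty)$ such that, for each $j=1,\dots,n$, \[ \liminf_{q\to\infty}\psi_j\big(q^{-1}\mathbf{P}(q)\big)=\inf\psi_j(E)\quad\text{and}\quad \limsup_{q\to\infty}\psi_j\big(q^{-1}\mathbf{P}(q)\big)=\frac{j}{n}. \]
   Context: $\bar\Delta^{(n)}=\{(a_1,\dots,a_n)\in\mathbb{R}^n: 0\le a_1\le\cdots\le a_n,\ a_1+\cdots+a_n=1\}$; for $j=1,\dots,n$, $\psi_j\colon\bar\Delta^{(n)}\to\mathbb{R}$ is $\psi_j(a_1,\dots,a_n)=a_1+\cdots+a_j$. A map $\mathbf{P}\colon I\to\mathbb{R}^n$ on an interval $I\subseteq[0,\infty)$ with non-empty interior is continuous piecewise linear if it is continuous, the set of points of $I$ where it is not differentiable (including endpoints of $I$ lying in $I$) is discrete in $I$, and its derivative is locally constant off that set. A generalized $n$-system on $I$ is a continuous piecewise linear map $\mathbf{P}=(P_1,\dots,P_n)\colon I\to\mathbb{R}^n$ such that: (G1) for each $q\in I$, $0\le P_1(q)\le\cdots\le P_n(q)$ and $P_1(q)+\cdots+P_n(q)=q$; (G2) on each non-empty open subinterval $H$ of $I$ on which $\mathbf{P}$ is differentiable, there are integers $1\le \underline{r}\le\overline{r}\le n$ such that $P_{\underline r},\dots,P_{\overline r}$ coincide on $H$ and have slope $1/(\overline r-\underline r+1)$, while every other $P_j$ is constant on $H$; (G3) if $q$ is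 an interior point of $I$ where $\mathbf{P}$ is not differentiable, and $\underline r,\overline r,\underline s,\overline s$ are the integers with $P_j'(q^-)=1/(\overline r-\underline r+1)$ for $\underline r\le j\le\overline r$ and $P_j'(q^+)=1/(\overline s-\underline s+1)$ for $\underline s\le j\le \overline s$, and if $\underline r<\overline s$, then $P_{\underline r}(q)=\cdots=P_{\overline s}(q)$. *)

From Stdlib Require Import Reals Lra Lia List Bool.
Open Scope R_scope.

(* Points of R^n are represented as functions  nat -> R  read on indices 1..n. *)

Fixpoint psum (a : nat -> R) (j : nat) : R :=
  match j with
  | O => 0
  | S k => psum a k + a (S k)
  end.

Definition in_Delta_bar (n : nat) (a : nat -> R) : Prop :=
  0 <= a 1%nat /\
  (forall j : nat, (1 <= j < n)%nat -> a j <= a (S j)) /\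
  psum a n = 1.

Definition psi (j : nat) (a : nat -> R) : R := psum a j.

Definition is_inf (S : R -> Prop) (m : R) : Prop :=
  (forall x, S x -> m <= x) /\
  (forall m', (forall x, S x -> m' <= x) -> m' <= m).

Definition is_liminf_infty (f : R -> R) (L : R) : Prop :=
  forall eps, eps > 0 ->
    (exists Q, forall q, q >= Q -> f q > L - eps) /\
    (forall Q, exists q, q >= Q /\ f q < L + eps).

Definition is_limsup_infty (f : R -> R) (L : R) : Prop :=
  forall eps, eps > 0 ->
    (exists Q, forall q, q >= Q -> f q < L + eps) /\
    (forall Q, exists q, q >= Q /\ f q > L - eps).

(* A map P : I -> R^n is represented by P : nat -> R -> R, components P 1 .. P n. *)

Definition diff_at (n : nat) (P : nat -> R -> R) (q : R) : Prop :=
  forall j, (1 <= j <= n)%nat -> exists l, derivable_pt_lim (P j) q l.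

Definition nondiff_pt (n : nat) (a : R) (P : nat -> R -> R) (q : R) : Prop :=
  q = a \/ (q > a /\ ~ diff_at n P q).

Definition cont_pl (n : nat) (a : R) (P : nat -> R -> R) : Prop :=
  (forall j, (1 <= j <= n)%nat -> forall q, q >= a ->
     forall eps, eps > 0 -> exists delta, delta > 0 /\
       forall x, x >= a -> Rabs (x - q) < delta -> Rabs (P j x - P j q) < eps) /\
  (* the set of non-differentiability points is discrete (locally finite) in I *)
  (forall q, q >= a -> exists eps, eps > 0 /\ exists l : list R,
     forall r, nondiff_pt n a P r -> Rabs (r - q) < eps -> In r l) /\
  (forall q, q >= a -> ~ nondiff_pt n a P q ->
     exists eps, eps > 0 /\ forall x, Rabs (x - q) < eps -> x >= a ->
       ~ nondiff_pt n a P x ->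
       forall j, (1 <= j <= n)%nat -> forall l1 l2,
         derivable_pt_lim (P j) q l1 -> derivable_pt_lim (P j) x l2 -> l1 = l2).

Definition G2_pattern (n : nat) (P : nat -> R -> R) (c d : R) (rlo rhi : nat) : Prop :=
  (1 <= rlo)%nat /\ (rlo <= rhi)%nat /\ (rhi <= n)%nat /\
  (forall j, (rlo <= j <= rhi)%nat -> forall x, c < x < d ->
     P j x = P rlo x /\ derivable_pt_lim (P j) x (1 / INR (rhi - rlo + 1))) /\
  (forall j, (1 <= j <= n)%nat -> ~ (rlo <= j <= rhi)%nat ->
     forall x y, c < x < d -> c < y < d -> P j x = P j y).

Definition slopes_on (n : nat) (P : nat -> R -> R) (c d : R) (rlo rhi : nat) : Prop :=
  (1 <= rlo)%nat /\ (rlo <= rhi)%nat /\ (rhi <= n)%nat /\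
  forall x, c < x < d -> forall j, (1 <= j <= n)%nat ->
    derivable_pt_lim (P j) x
      (if andb (Nat.leb rlo j) (Nat.leb j rhi) then 1 / INR (rhi - rlo + 1) else 0).

Definition left_slopes (n : nat) (P : nat -> R -> R) (q : R) (rlo rhi : nat) : Prop :=
  exists eps, eps > 0 /\ slopes_on n P (q - eps) q rlo rhi.

Definition right_slopes (n : nat) (P : nat -> R -> R) (q : R) (rlo rhi : nat) : Prop :=
  exists eps, eps > 0 /\ slopes_on n P q (q + eps) rlo rhi.

Definition gen_n_system (n : nat) (a : R) (P : nat -> R -> R) : Prop :=
  cont_pl n a P /\
  (forall q, q >= a ->
     0 <= P 1%nat q /\
     (forall j, (1 <= j < n)%nat -> P j q <= P (S j) q) /\
     psum (fun j => P j q) n = q) /\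
  (forall c d, a <= c -> c < d -> (forall x, c < x < d -> diff_at n P x) ->
     exists rlo rhi, G2_pattern n P c d rlo rhi) /\
  (forall q, q > a -> ~ diff_at n P q ->
     forall rlo rhi slo shi,
       left_slopes n P q rlo rhi -> right_slopes n P q slo shi ->
       (rlo < shi)%nat ->
       forall j, (rlo <= j <= shi)%nat -> P j q = P rlo q).

From Stdlib Require Import Reals Lra Lia List Bool Classical ClassicalEpsilon.
Open Scope R_scope.

(* A polygonal path whose pieces raise a block of equal consecutive coordinates at total speed 1
   is a generalized n-system as soon as its vertices are sorted, consecutive blocks differ and
   the blocks meet the coincidence condition of (G3) at each vertex.  We build such a path
   in cycles: cycle k starts at a diagonal point, where psi_j(P(q)/q) = j/n, the largest value a
   sorted vector allows; it then climbs, by raising top blocks, to a point y_k proportional to a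
   small perturbation of a point X_k of E, and then, by raising bottom blocks, to the next
   diagonal point.  Every vertex of cycle k is y_k clipped from above or below, which can only
   increase psi_j of the normalised vector, and a lower bound c * q on the partial sums survives
   linear interpolation; so psi_j(P(q)/q) stays above psi_j(X_k) up to the perturbation and
   reaches it at y_k.  Letting X_k run through near-minimisers of each psi_j with increasing
   precision gives the liminf. *)

(** * Partial sums and blocks *)

Lemma psum_ext f g j : (forall i, (1 <= i <= j)%nat -> f i = g i) -> psum f j = psum g j.
Proof.
  induction j as [|j IH]; intros H; simpl; [reflexivity|].
  rewrite IH, H; [reflexivity | lia | intros i Hi; apply H; lia].
Qed.

Lemma psum_add f g j : psum (fun i => f i + g i) j = psum f j + psum g j.
Proof. induction j; simpl; [lra|]. rewrite IHj; lra. Qed.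

Lemma psum_sub f g j : psum (fun i => f i - g i) j = psum f j - psum g j.
Proof. induction j; simpl; [lra|]. rewrite IHj; lra. Qed.

Lemma psum_scal c f j : psum (fun i => c * f i) j = c * psum f j.
Proof. induction j; simpl; [lra|]. rewrite IHj; lra. Qed.

Lemma psum_const a j : psum (fun _ => a) j = INR j * a.
Proof. induction j; cbn [psum]; [simpl; lra|]. rewrite IHj, S_INR; lra. Qed.

Lemma psum_le f g j : (forall i, (1 <= i <= j)%nat -> f i <= g i) -> psum f j <= psum g j.
Proof.
  induction j as [|j IH]; intros H; simpl; [lra|].
  assert (psum f j <= psum g j) by (apply IH; intros; apply H; lia).
  specialize (H (S j) ltac:(lia)). lra.
Qed.

Lemma psum_nonneg f j : (forall i, (1 <= i <= j)%nat -> 0 <= f i) -> 0 <= psum f j.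
Proof. intros H. rewrite <- (Rmult_0_r (INR j)), <- psum_const. now apply psum_le. Qed.

Lemma psum_tail_le f g j N : (j <= N)%nat -> (forall i, (j < i <= N)%nat -> f i <= g i) ->
  psum f N - psum f j <= psum g N - psum g j.
Proof.
  induction N as [|N IH]; intros Hj H.
  - replace j with 0%nat by lia. simpl. lra.
  - destruct (Nat.eq_dec j (S N)) as [->|Hne]; [lra|]. simpl.
    assert (psum f N - psum f j <= psum g N - psum g j) by (apply IH; [lia | intros; apply H; lia]).
    specialize (H (S N) ltac:(lia)). lra.
Qed.

Lemma psum_mono f j N : (j <= N)%nat -> (forall i, (1 <= i <= N)%nat -> 0 <= f i) ->
  psum f j <= psum f N.
Proof.
  intros Hj H. pose proof (psum_tail_le (fun _ => 0) f j N Hj ltac:(intros; apply H; lia)).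
  rewrite !psum_const in *. lra.
Qed.

Lemma psum_term_le f j i : (forall i, (1 <= i <= j)%nat -> 0 <= f i) -> (1 <= i <= j)%nat ->
  f i <= psum f j.
Proof.
  intros H Hi. destruct i as [|i]; [lia|].
  assert (0 <= psum f i) by (apply psum_nonneg; intros; apply H; lia).
  assert (psum f (S i) <= psum f j) by (apply psum_mono; [lia | exact H]).
  simpl in *. lra.
Qed.

Definition sorted_on (n : nat) (f : nat -> R) : Prop :=
  forall i, (1 <= i < n)%nat -> f i <= f (S i).

Lemma sorted_on_le n f i i' : sorted_on n f -> (1 <= i <= i')%nat -> (i' <= n)%nat -> f i <= f i'.
Proof.
  intros H Hi. induction i' as [|i' IH]; intros Hn; [lia|].
  destruct (Nat.eq_dec i (S i')) as [->|]; [lra|].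
  apply Rle_trans with (f i'); [apply IH; lia | apply H; lia].
Qed.

Lemma strictly_sorted_lt n f i i' : (forall i, (1 <= i < n)%nat -> f i < f (S i)) ->
  (1 <= i < i')%nat -> (i' <= n)%nat -> f i < f i'.
Proof.
  intros H Hi. induction i' as [|i' IH]; intros Hn; [lia|].
  destruct (Nat.eq_dec i i') as [->|]; [apply H; lia|].
  apply Rlt_trans with (f i'); [apply IH; lia | apply H; lia].
Qed.

Lemma sorted_psum_avg v n j : sorted_on n v -> (1 <= j <= n)%nat ->
  INR n * psum v j <= INR j * psum v n.
Proof.
  intros Hs Hj.
  assert (Hhead : psum v j <= INR j * v j).
  { rewrite <- psum_const. apply psum_le. intros. apply (sorted_on_le n); auto; lia. }
  assert (Htail : psum (fun _ => v j) n - psum (fun _ => v j) j <= psum v n - psum v j).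
  { apply psum_tail_le; [lia|]. intros. apply (sorted_on_le n); auto; lia. }
  rewrite !psum_const in Htail.
  assert (INR j <= INR n) by (apply le_INR; lia). pose proof (pos_INR j).
  assert ((INR n - INR j) * psum v j <= (INR n - INR j) * (INR j * v j))
    by (apply Rmult_le_compat_l; lra).
  assert (INR j * ((INR n - INR j) * v j) <= INR j * (psum v n - psum v j))
    by (apply Rmult_le_compat_l; lra).
  nra.
Qed.

Lemma INR_pos k : (1 <= k)%nat -> 0 < INR k.
Proof. intros. apply lt_0_INR. lia. Qed.

(* Spelled as in [slopes_on], so that [block_slope] matches the slopes there by conversion. *)
Definition in_block (a b i : nat) : bool := andb (Nat.leb a i) (Nat.leb i b).
Definition block_ind (a b i : nat) : R := if in_block a b i then 1 else 0.
Definition block_slope (a b i : nat) : R := if in_block a b i then 1 / INR (b - a + 1) else 0.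

Lemma in_block_true a b i : in_block a b i = true <-> (a <= i <= b)%nat.
Proof. unfold in_block. rewrite andb_true_iff, !Nat.leb_le. tauto. Qed.

Lemma in_block_false a b i : in_block a b i = false <-> ~ (a <= i <= b)%nat.
Proof. rewrite <- in_block_true. destruct (in_block a b i); split; congruence. Qed.

Lemma psum_block_ind a b n : (1 <= a <= b)%nat -> (b <= n)%nat ->
  psum (block_ind a b) n = INR (b - a + 1).
Proof.
  intros Hab Hb. replace (b - a + 1)%nat with (Nat.min b n + 1 - a)%nat by lia. clear Hb.
  induction n as [|n IH]; simpl psum.
  - replace (Nat.min b 0 + 1 - a)%nat with 0%nat by lia. simpl; lra.
  - rewrite IH. unfold block_ind. destruct (in_block a b (S n)) eqn:E.
    + apply in_block_true in E.
      replace (Nat.min b (S n) + 1 - a)%nat with (S (Nat.min b n + 1 - a)) by lia.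
      rewrite S_INR. lra.
    + apply in_block_false in E.
      replace (Nat.min b (S n) + 1 - a)%nat with (Nat.min b n + 1 - a)%nat by lia. lra.
Qed.

Lemma block_slope_ind a b i : (a <= b)%nat -> block_slope a b i = block_ind a b i / INR (b - a + 1).
Proof. intros. unfold block_slope, block_ind. destruct (in_block a b i); [lra | unfold Rdiv; ring]. Qed.

Lemma block_slope_pos a b i : in_block a b i = true -> 0 < block_slope a b i.
Proof.
  intros H. unfold block_slope. rewrite H. unfold Rdiv. rewrite Rmult_1_l.
  apply Rinv_0_lt_compat, INR_pos. lia.
Qed.

Lemma block_slope_nonneg a b i : 0 <= block_slope a b i.
Proof.
  destruct (in_block a b i) eqn:E; [now apply Rlt_le, block_slope_pos|].
  unfold block_slope. rewrite E. lra.
Qed.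

Lemma psum_block_slope a b n : (1 <= a <= b)%nat -> (b <= n)%nat -> psum (block_slope a b) n = 1.
Proof.
  intros. rewrite (psum_ext _ (fun i => / INR (b - a + 1) * block_ind a b i)).
  - rewrite psum_scal, psum_block_ind by lia. field. apply Rgt_not_eq, INR_pos. lia.
  - intros. rewrite block_slope_ind by lia. unfold Rdiv. ring.
Qed.

Lemma block_slope_eq a b a' b' i :
  block_slope a b i = block_slope a' b' i -> in_block a b i = in_block a' b' i.
Proof.
  intros H. destruct (in_block a b i) eqn:E1, (in_block a' b' i) eqn:E2; auto.
  - pose proof (block_slope_pos _ _ _ E1). unfold block_slope at 2 in H. rewrite E2 in H. lra.
  - pose proof (block_slope_pos _ _ _ E2). unfold block_slope at 1 in H. rewrite E1 in H. lra.
Qed.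

Lemma block_slope_inj n a b a' b' : (1 <= a <= b)%nat -> (b <= n)%nat ->
  (1 <= a' <= b')%nat -> (b' <= n)%nat ->
  (forall i, (1 <= i <= n)%nat -> block_slope a b i = block_slope a' b' i) -> a = a' /\ b = b'.
Proof.
  intros. assert (Hi : forall i, (1 <= i <= n)%nat -> in_block a b i = in_block a' b' i)
    by (intros; apply block_slope_eq; auto).
  assert (K : forall i, (1 <= i <= n)%nat -> (a <= i <= b)%nat <-> (a' <= i <= b')%nat).
  { intros i Hin. rewrite <- !in_block_true, Hi by exact Hin. reflexivity. }
  pose proof (K a ltac:(lia)). pose proof (K a' ltac:(lia)).
  pose proof (K b ltac:(lia)). pose proof (K b' ltac:(lia)). lia.
Qed.

Lemma psi_scaled (P : nat -> R -> R) j q : q <> 0 ->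
  psi j (fun i => P i q / q) = psum (fun i => P i q) j / q.
Proof.
  intros. unfold psi. rewrite (psum_ext _ (fun i => / q * P i q)) by (intros; unfold Rdiv; ring).
  rewrite psum_scal. unfold Rdiv. ring.
Qed.

Lemma sorted_psum_ratio_le v n j : sorted_on n v -> (1 <= j <= n)%nat -> 0 < psum v n ->
  psum v j / psum v n <= INR j / INR n.
Proof.
  intros Hs Hj Hp. pose proof (sorted_psum_avg v n j Hs Hj). assert (0 < INR n) by (apply lt_0_INR; lia).
  apply Rmult_le_reg_r with (psum v n * INR n); [nra|].
  replace (psum v j / psum v n * (psum v n * INR n)) with (INR n * psum v j) by (field; lra).
  replace (INR j / INR n * (psum v n * INR n)) with (INR j * psum v n) by (field; lra). lra.
Qed.

Lemma derivable_pt_lim_affine a b s x : derivable_pt_lim (fun t => a + (t - b) * s) x s.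
Proof.
  intros eps He. exists (mkposreal 1 Rlt_0_1). intros h Hh _.
  replace ((a + (x + h - b) * s - (a + (x - b) * s)) / h - s) with 0 by (field; auto).
  rewrite Rabs_R0; lra.
Qed.

Lemma derivable_pt_lim_local f g x l eps : eps > 0 -> (forall y, Rabs (y - x) < eps -> f y = g y) ->
  derivable_pt_lim g x l -> derivable_pt_lim f x l.
Proof.
  intros He Hfg Hg e He'. destruct (Hg e He') as [d Hd].
  assert (Hm : 0 < Rmin d eps) by (apply Rmin_glb_lt; [apply cond_pos | lra]).
  exists (mkposreal _ Hm). intros h Hh0 Hh. simpl in Hh.
  pose proof (Rmin_l d eps). pose proof (Rmin_r d eps).
  rewrite !Hfg.
  - apply Hd; auto. lra.
  - rewrite Rminus_diag, Rabs_R0; lra.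
  - replace (x + h - x) with h by ring. lra.
Qed.

Lemma derivable_pt_lim_along f x l s :
  derivable_pt_lim f x l ->
  (forall d, d > 0 -> exists h, h <> 0 /\ Rabs h < d /\ f (x + h) = f x + s * h) -> l = s.
Proof.
  intros Hd Hh. apply Rminus_diag_uniq. destruct (Req_dec (l - s) 0) as [|Hne]; [assumption|].
  exfalso. assert (He : Rabs (l - s) > 0) by (apply Rabs_pos_lt; exact Hne).
  destruct (Hd _ He) as [d Hdd]. destruct (Hh d (cond_pos d)) as [h [Hh0 [Hhd Hf]]].
  specialize (Hdd h Hh0 Hhd). rewrite Hf in Hdd.
  replace ((f x + s * h - f x) / h - l) with (- (l - s)) in Hdd by (field; auto).
  rewrite Rabs_Ropp in Hdd. lra.
Qed.

Lemma small_increment_left d e : d > 0 -> e > 0 ->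
  exists h, h <> 0 /\ Rabs h < d /\ - e < h < 0.
Proof.
  intros Hd He. exists (- Rmin (d / 2) (e / 2)).
  pose proof (Rmin_l (d / 2) (e / 2)). pose proof (Rmin_r (d / 2) (e / 2)).
  assert (0 < Rmin (d / 2) (e / 2)) by (apply Rmin_glb_lt; lra).
  rewrite Rabs_Ropp, Rabs_pos_eq; lra.
Qed.

Lemma small_increment_right d e : d > 0 -> e > 0 ->
  exists h, h <> 0 /\ Rabs h < d /\ 0 < h < e.
Proof.
  intros Hd He. destruct (small_increment_left d e Hd He) as [h [Hh0 [Hhd Hhe]]].
  exists (- h). rewrite Rabs_Ropp. lra.
Qed.

(** * Polygonal generalized n-systems *)

(* [V m] is the m-th vertex; on the m-th piece the coordinates [lo m .. hi m] rise together. *)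
Record vertex_path (n : nat) (V : nat -> nat -> R) (lo hi : nat -> nat) : Prop := {
  vp_block : forall m, (1 <= lo m <= hi m /\ hi m <= n)%nat;
  vp_start : psum (V 0%nat) n = 1;
  vp_step : forall m, exists v, v > 0 /\ forall i, (1 <= i <= n)%nat ->
    V (S m) i = V m i + v * block_ind (lo m) (hi m) i;
  vp_sorted : forall m, 0 <= V m 1%nat /\ sorted_on n (V m);
  vp_block_flat : forall m i, (lo m <= i <= hi m)%nat -> V m i = V m (lo m);
  vp_merge : forall m, (lo m < hi (S m))%nat -> forall i, (lo m <= i <= hi (S m))%nat ->
    V (S m) i = V (S m) (lo m);
  vp_block_change : forall m, exists i, (1 <= i <= n)%nat /\
    in_block (lo m) (hi m) i <> in_block (lo (S m)) (hi (S m)) i;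
  vp_unbounded : forall M, exists m, psum (V m) n > M
}.

Section Interpolation.

Variables (n : nat) (V : nat -> nat -> R) (lo hi : nat -> nat).
Hypothesis HV : vertex_path n V lo hi.

Definition vtime (m : nat) : R := psum (V m) n.

Lemma vertex_step m i : (1 <= i <= n)%nat ->
  V (S m) i = V m i + (vtime (S m) - vtime m) * block_slope (lo m) (hi m) i.
Proof.
  intros Hi. destruct (vp_step _ _ _ _ HV m) as [v [Hv Hstep]].
  destruct (vp_block _ _ _ _ HV m).
  assert (Ht : vtime (S m) = vtime m + v * INR (hi m - lo m + 1)).
  { unfold vtime. rewrite (psum_ext _ _ _ Hstep), psum_add, psum_scal, psum_block_ind by lia.
    reflexivity. }
  rewrite Hstep, Ht, block_slope_ind by lia. field. apply Rgt_not_eq, INR_pos. lia.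
Qed.

Lemma vtime_lt_S m : vtime m < vtime (S m).
Proof.
  destruct (vp_step _ _ _ _ HV m) as [v [Hv Hstep]]. destruct (vp_block _ _ _ _ HV m).
  unfold vtime. rewrite (psum_ext _ _ _ Hstep), psum_add, psum_scal, psum_block_ind by lia.
  assert (0 < INR (hi m - lo m + 1)) by (apply INR_pos; lia). nra.
Qed.

Lemma vtime_le m m' : (m <= m')%nat -> vtime m <= vtime m'.
Proof. induction 1; [lra|]. pose proof (vtime_lt_S m0). lra. Qed.

Lemma vtime_ge_1 m : 1 <= vtime m.
Proof. rewrite <- (vp_start _ _ _ _ HV). apply (vtime_le 0). lia. Qed.

Lemma vertex_le m m' i : (1 <= i <= n)%nat -> (m <= m')%nat -> V m i <= V m' i.
Proof.
  intros Hi. induction 1; [lra|]. rewrite (vertex_step m0 i Hi).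
  pose proof (vtime_lt_S m0). pose proof (block_slope_nonneg (lo m0) (hi m0) i). nra.
Qed.

Definition on_piece (m : nat) (t : R) : Prop := vtime m <= t < vtime (S m).

Lemma on_piece_exists t : 1 <= t -> exists m, on_piece m t.
Proof.
  intros Ht. destruct (vp_unbounded _ _ _ _ HV t) as [M HM]. fold (vtime M) in HM.
  induction M as [|M IH].
  - unfold vtime in HM. rewrite (vp_start _ _ _ _ HV) in HM. lra.
  - destruct (Rlt_dec t (vtime M)); [apply IH; lra | exists M; split; lra].
Qed.

Lemma on_piece_unique t m m' : on_piece m t -> on_piece m' t -> m = m'.
Proof.
  unfold on_piece. intros H1 H2. destruct (Nat.lt_total m m') as [h|[h|h]]; auto.
  - pose proof (vtime_le (S m) m' h). lra.
  - pose proof (vtime_le (S m') m h). lra.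
Qed.

Definition piece_index (t : R) : nat := epsilon (inhabits 0%nat) (fun m => on_piece m t).

Lemma piece_index_spec t : 1 <= t -> on_piece (piece_index t) t.
Proof. intros. unfold piece_index. apply epsilon_spec, on_piece_exists. assumption. Qed.

Lemma piece_index_eq t m : on_piece m t -> piece_index t = m.
Proof.
  intros H. apply (on_piece_unique t); [apply piece_index_spec|exact H].
  destruct H. pose proof (vtime_ge_1 m). lra.
Qed.

Definition interp (i : nat) (t : R) : R :=
  let m := piece_index t in V m i + (t - vtime m) * block_slope (lo m) (hi m) i.

Lemma interp_on_piece m i t : on_piece m t ->
  interp i t = V m i + (t - vtime m) * block_slope (lo m) (hi m) i.
Proof. intros H. unfold interp. rewrite (piece_index_eq t m H). reflexivity. Qed.

Lemma interp_at_vertex m i : interp i (vtime m) = V m i.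
Proof. rewrite (interp_on_piece m); [ring|]. pose proof (vtime_lt_S m). split; lra. Qed.

Lemma interp_on_closed_piece m i t : (1 <= i <= n)%nat -> vtime m <= t <= vtime (S m) ->
  interp i t = V m i + (t - vtime m) * block_slope (lo m) (hi m) i.
Proof.
  intros Hi Ht. destruct (Req_dec t (vtime (S m))) as [->|Hne].
  - rewrite interp_at_vertex. apply vertex_step, Hi.
  - apply interp_on_piece. split; lra.
Qed.

Lemma interp_G1 t : 1 <= t ->
  0 <= interp 1 t /\ sorted_on n (fun i => interp i t) /\ psum (fun i => interp i t) n = t.
Proof.
  intros Ht. pose proof (piece_index_spec t Ht) as Hm. set (m := piece_index t) in *.
  destruct Hm as [Hm1 Hm2]. pose proof (vtime_lt_S m).
  destruct (vp_sorted _ _ _ _ HV m) as [H0 Hs]. destruct (vp_sorted _ _ _ _ HV (S m)) as [_ Hs'].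
  destruct (vp_block _ _ _ _ HV m).
  unfold interp; fold m. split; [|split].
  - pose proof (block_slope_nonneg (lo m) (hi m) 1). nra.
  - (* both endpoints of the piece are sorted, and sortedness is convex *)
    intros j Hj. pose proof (Hs j Hj) as Hsm. pose proof (Hs' j Hj) as HsSm.
    rewrite !vertex_step in HsSm by lia.
    set (s := block_slope (lo m) (hi m)) in *.
    set (L := vtime (S m) - vtime m) in *. set (tau := t - vtime m).
    assert (0 <= tau <= L) by (unfold tau, L; lra).
    destruct (Rle_dec (s j) (s (S j))); nra.
  - rewrite psum_add, psum_scal, psum_block_slope by lia. fold (vtime m). ring.
Qed.

Lemma interp_mono i t1 t2 : (1 <= i <= n)%nat -> 1 <= t1 <= t2 -> interp i t1 <= interp i t2.
Proof.
  intros Hi Ht.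
  pose proof (piece_index_spec t1 ltac:(lra)) as H1. pose proof (piece_index_spec t2 ltac:(lra)) as H2.
  set (m1 := piece_index t1) in *. set (m2 := piece_index t2) in *.
  rewrite (interp_on_piece m1), (interp_on_piece m2) by assumption.
  destruct H1, H2.
  pose proof (block_slope_nonneg (lo m1) (hi m1) i). pose proof (block_slope_nonneg (lo m2) (hi m2) i).
  destruct (Nat.lt_total m1 m2) as [h|[<-|h]].
  - pose proof (vertex_le (S m1) m2 i Hi h) as Hle. rewrite vertex_step in Hle by exact Hi. nra.
  - nra.
  - pose proof (vtime_le (S m2) m1 h). lra.
Qed.

Lemma interp_lipschitz i t1 t2 : (1 <= i <= n)%nat -> 1 <= t1 <= t2 ->
  0 <= interp i t2 - interp i t1 <= t2 - t1.
Proof.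
  intros Hi Ht. pose proof (interp_mono i t1 t2 Hi Ht). split; [lra|].
  destruct (interp_G1 t1 ltac:(lra)) as [_ [_ S1]]. destruct (interp_G1 t2 ltac:(lra)) as [_ [_ S2]].
  replace (t2 - t1) with (psum (fun i => interp i t2 - interp i t1) n) by (rewrite psum_sub; lra).
  apply (psum_term_le (fun i => interp i t2 - interp i t1)); [|exact Hi].
  intros k Hk. pose proof (interp_mono k t1 t2 Hk Ht). lra.
Qed.

Lemma interp_derivable_on_piece m i t : vtime m < t < vtime (S m) ->
  derivable_pt_lim (interp i) t (block_slope (lo m) (hi m) i).
Proof.
  intros Ht.
  apply (derivable_pt_lim_local _ (fun x => V m i + (x - vtime m) * block_slope (lo m) (hi m) i) _ _
    (Rmin (t - vtime m) (vtime (S m) - t))).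
  - apply Rmin_glb_lt; lra.
  - intros y Hy. apply interp_on_piece.
    pose proof (Rmin_l (t - vtime m) (vtime (S m) - t)). pose proof (Rmin_r (t - vtime m) (vtime (S m) - t)).
    apply Rabs_def2 in Hy. split; lra.
  - apply derivable_pt_lim_affine.
Qed.

Lemma interp_not_diff_at_vertex m : ~ diff_at n interp (vtime (S m)).
Proof.
  intros Hd. destruct (vp_block_change _ _ _ _ HV m) as [i [Hi Hne]]. destruct (Hd i Hi) as [l Hl].
  pose proof (vtime_lt_S m). pose proof (vtime_lt_S (S m)).
  apply Hne, block_slope_eq.
  transitivity l; [symmetry|].
  - apply (derivable_pt_lim_along _ _ _ _ Hl). intros d Hdp.
    destruct (small_increment_left d (vtime (S m) - vtime m)) as [h [Hh0 [Hhd Hh]]]; [lra|lra|].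
    exists h. repeat split; auto.
    rewrite (interp_on_closed_piece m i) by (auto; lra). rewrite interp_at_vertex, vertex_step by exact Hi. ring.
  - apply (derivable_pt_lim_along _ _ _ _ Hl). intros d Hdp.
    destruct (small_increment_right d (vtime (S (S m)) - vtime (S m))) as [h [Hh0 [Hhd Hh]]]; [lra|lra|].
    exists h. repeat split; auto.
    rewrite (interp_on_piece (S m)) by (split; lra). rewrite interp_at_vertex. ring.
Qed.

Lemma interp_diff_off_vertices t : 1 <= t -> (forall m, t <> vtime m) -> diff_at n interp t.
Proof.
  intros Ht Hb j Hj. destruct (piece_index_spec t Ht) as [[Hlt|Heq] Hup].
  - eexists. apply interp_derivable_on_piece. split; eassumption.
  - exfalso. apply (Hb _ (eq_sym Heq)).
Qed.

Lemma interp_nondiff_pt t : nondiff_pt n 1 interp t -> exists m, t = vtime m.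
Proof.
  intros [Ht|[Ht Hnd]].
  - exists 0%nat. unfold vtime. rewrite (vp_start _ _ _ _ HV). exact Ht.
  - apply NNPP. intros Hno. apply Hnd, interp_diff_off_vertices; [lra|].
    intros m Hm. apply Hno. exists m. exact Hm.
Qed.

Lemma vertex_index_bound m t : vtime m < t + 1 -> (m < S (piece_index (t + 1)))%nat.
Proof.
  intros Hm. destruct (Nat.lt_ge_cases m (S (piece_index (t + 1)))) as [|Hge]; [assumption|].
  exfalso. pose proof (vtime_ge_1 m).
  destruct (piece_index_spec (t + 1)) as [_ Hup]; [lra|].
  pose proof (vtime_le _ _ Hge). lra.
Qed.

Lemma interp_cont_pl : cont_pl n 1 interp.
Proof.
  split; [|split].
  - intros j Hj q Hq eps He. exists eps. split; [exact He|]. intros x Hx Hxq.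
    destruct (Rle_dec x q).
    + pose proof (interp_lipschitz j x q Hj ltac:(lra)).
      rewrite Rabs_minus_sym in Hxq |- *. rewrite Rabs_pos_eq in * by lra. lra.
    + pose proof (interp_lipschitz j q x Hj ltac:(lra)). rewrite Rabs_pos_eq in * by lra. lra.
  - intros q Hq. exists 1. split; [lra|].
    exists (map vtime (seq 0 (S (piece_index (q + 1))))). intros r Hr Hrq.
    destruct (interp_nondiff_pt r Hr) as [m ->]. apply in_map. apply in_seq.
    apply Rabs_def2 in Hrq. pose proof (vertex_index_bound m q ltac:(lra)). lia.
  - intros q Hq Hnd.
    assert (Hq1 : q > 1) by (destruct Hq as [| ->]; [assumption | exfalso; apply Hnd; left; reflexivity]).
    destruct (piece_index_spec q ltac:(lra)) as [Hlo Hup]. set (m := piece_index q) in *.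
    assert (Hlt : vtime m < q).
    { destruct Hlo as [|Heq]; [assumption|]. exfalso. destruct m as [|m'].
      - unfold vtime in Heq. rewrite (vp_start _ _ _ _ HV) in Heq. lra.
      - apply Hnd. right. split; [exact Hq1|]. rewrite <- Heq. apply interp_not_diff_at_vertex. }
    exists (Rmin (q - vtime m) (vtime (S m) - q)). split; [apply Rmin_glb_lt; lra|].
    intros x Hx _ _ j _ l1 l2 D1 D2.
    pose proof (Rmin_l (q - vtime m) (vtime (S m) - q)). pose proof (Rmin_r (q - vtime m) (vtime (S m) - q)).
    apply Rabs_def2 in Hx.
    rewrite (uniqueness_limite _ _ _ _ D1 (interp_derivable_on_piece m j q ltac:(lra))).
    rewrite (uniqueness_limite _ _ _ _ D2 (interp_derivable_on_piece m j x ltac:(lra))).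
    reflexivity.
Qed.

Lemma slopes_on_piece c d rlo rhi m x : slopes_on n interp c d rlo rhi -> c < x < d ->
  vtime m < x < vtime (S m) -> rlo = lo m /\ rhi = hi m.
Proof.
  intros [h1 [h2 [h3 Hd]]] Hx Hm. destruct (vp_block _ _ _ _ HV m).
  apply (block_slope_inj n); auto; try lia. intros i Hi.
  apply (uniqueness_limite _ _ _ _ (Hd x Hx i Hi)), interp_derivable_on_piece, Hm.
Qed.

Lemma interp_on_block m j t : on_piece m t -> (lo m <= j <= hi m)%nat -> interp j t = interp (lo m) t.
Proof.
  intros Ht Hj. destruct (vp_block _ _ _ _ HV m).
  rewrite !(interp_on_piece m) by exact Ht. rewrite (vp_block_flat _ _ _ _ HV m j Hj).
  unfold block_slope. replace (in_block (lo m) (hi m) j) with true by (symmetry; apply in_block_true; lia).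
  replace (in_block (lo m) (hi m) (lo m)) with true by (symmetry; apply in_block_true; lia).
  reflexivity.
Qed.

Lemma interp_G2 c d : 1 <= c -> c < d -> (forall x, c < x < d -> diff_at n interp x) ->
  exists rlo rhi, G2_pattern n interp c d rlo rhi.
Proof.
  intros Hc Hcd Hdf. destruct (piece_index_spec ((c + d) / 2) ltac:(lra)) as [Hm1 Hm2].
  set (m := piece_index ((c + d) / 2)) in *.
  assert (Hcm : vtime m <= c).
  { destruct (Rle_dec (vtime m) c) as [|h]; [assumption|]. exfalso. destruct m as [|m'].
    - unfold vtime in h. rewrite (vp_start _ _ _ _ HV) in h. lra.
    - apply (interp_not_diff_at_vertex m'). apply Hdf. lra. }
  assert (Hdm : d <= vtime (S m)).
  { destruct (Rle_dec d (vtime (S m))) as [|h]; [assumption|]. exfalso.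
    apply (interp_not_diff_at_vertex m). apply Hdf. lra. }
  destruct (vp_block _ _ _ _ HV m) as [[Hl1 Hl2] Hl3].
  exists (lo m), (hi m). split; [lia | split; [lia | split; [lia | split]]].
  - intros j Hj x Hx. split; [apply (interp_on_block m); [split|]; lra + lia|].
    replace (1 / INR (hi m - lo m + 1)) with (block_slope (lo m) (hi m) j)
      by (unfold block_slope; replace (in_block (lo m) (hi m) j) with true
            by (symmetry; apply in_block_true; lia); reflexivity).
    apply interp_derivable_on_piece. lra.
  - intros j Hj Hnj x y Hx Hy. rewrite !(interp_on_piece m) by (split; lra).
    unfold block_slope. replace (in_block (lo m) (hi m) j) with false
      by (symmetry; apply in_block_false; assumption). ring.
Qed.

Lemma interp_G3 q : q > 1 -> forall rlo rhi slo shi,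
  left_slopes n interp q rlo rhi -> right_slopes n interp q slo shi -> (rlo < shi)%nat ->
  forall j, (rlo <= j <= shi)%nat -> interp j q = interp rlo q.
Proof.
  intros Hq rlo rhi slo shi [e1 [He1 Hl]] [e2 [He2 Hr]] Hlt j Hj.
  destruct (piece_index_spec q ltac:(lra)) as [Hm1 Hm2]. set (m := piece_index q) in *.
  assert (Hright : slo = lo m /\ shi = hi m).
  { pose proof (Rmin_l e2 (vtime (S m) - q)). pose proof (Rmin_r e2 (vtime (S m) - q)).
    assert (0 < Rmin e2 (vtime (S m) - q)) by (apply Rmin_glb_lt; lra).
    apply (slopes_on_piece q (q + e2) slo shi m (q + Rmin e2 (vtime (S m) - q) / 2) Hr); lra. }
  destruct Hright as [_ ->].
  destruct Hm1 as [Hm|Hm].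
  - (* [q] is inside a piece: left and right slopes agree *)
    assert (Hleft : rlo = lo m).
    { pose proof (Rmin_l e1 (q - vtime m)). pose proof (Rmin_r e1 (q - vtime m)).
      assert (0 < Rmin e1 (q - vtime m)) by (apply Rmin_glb_lt; lra).
      apply (slopes_on_piece (q - e1) q rlo rhi m (q - Rmin e1 (q - vtime m) / 2) Hl); lra. }
    subst rlo. apply (interp_on_block m); [split; lra | exact Hj].
  -
    destruct m as [|m'].
    { unfold vtime in Hm. rewrite (vp_start _ _ _ _ HV) in Hm. lra. }
    pose proof (vtime_lt_S m').
    assert (Hleft : rlo = lo m').
    { pose proof (Rmin_l e1 (q - vtime m')). pose proof (Rmin_r e1 (q - vtime m')).
      assert (0 < Rmin e1 (q - vtime m')) by (apply Rmin_glb_lt; lra).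
      apply (slopes_on_piece (q - e1) q rlo rhi m' (q - Rmin e1 (q - vtime m') / 2) Hl); lra. }
    subst rlo. rewrite <- Hm, !interp_at_vertex. apply (vp_merge _ _ _ _ HV); assumption.
Qed.

Theorem interp_gen_n_system : gen_n_system n 1 interp.
Proof.
  split; [exact interp_cont_pl | split; [|split]].
  - intros q Hq. apply interp_G1. lra.
  - exact interp_G2.
  - intros q Hq _. exact (interp_G3 q Hq).
Qed.

End Interpolation.

(** * Clipping sorted vectors *)

Lemma psum_ratio_of_split y V j n rho : (1 <= j <= n)%nat ->
  (forall i, (1 <= i <= j)%nat -> rho * y i <= V i) -> (forall i, (j < i <= n)%nat -> V i <= rho * y i) ->
  (forall i, (1 <= i <= n)%nat -> 0 <= y i) ->
  psum y j * psum V n <= psum V j * psum y n.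
Proof.
  intros Hj Hhead Htail Hy.
  assert (Hh : rho * psum y j <= psum V j) by (rewrite <- psum_scal; apply psum_le; auto).
  assert (Ht : psum V n - psum V j <= rho * psum y n - rho * psum y j)
    by (rewrite <- !psum_scal; apply psum_tail_le; [lia | auto]).
  assert (Hy0 : 0 <= psum y j) by (apply psum_nonneg; intros; apply Hy; lia).
  assert (Hyt : psum y j <= psum y n) by (apply psum_mono; [lia | exact Hy]).
  assert (rho * psum y j * (psum y n - psum y j) <= psum V j * (psum y n - psum y j))
    by (apply Rmult_le_compat_r; lra).
  assert (psum y j * (psum V n - psum V j) <= psum y j * (rho * psum y n - rho * psum y j))
    by (apply Rmult_le_compat_l; lra).
  nra.
Qed.

Lemma clip_below_split y n j u : (1 <= j <= n)%nat -> sorted_on n y ->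
  (forall i, (1 <= i <= n)%nat -> 0 < y i) -> 0 <= u ->
  exists rho, (forall i, (1 <= i <= j)%nat -> rho * y i <= Rmin (y i) u) /\
              (forall i, (j < i <= n)%nat -> Rmin (y i) u <= rho * y i).
Proof.
  intros Hj Hs Hy Hu. pose proof (Hy j Hj) as Hyj.
  assert (Hle : forall i, (1 <= i <= j)%nat -> y i <= y j) by (intros; apply (sorted_on_le n); auto; lia).
  assert (Hge : forall i, (j < i <= n)%nat -> y j <= y i) by (intros; apply (sorted_on_le n); auto; lia).
  destruct (Rle_dec (y j) u).
  - exists 1. split; intros i Hi; pose proof (Hy i ltac:(lia)).
    + specialize (Hle i Hi). unfold Rmin; destruct (Rle_dec _ _); lra.
    + unfold Rmin; destruct (Rle_dec _ _); lra.
  - exists (u / y j). assert (Hr : u / y j * y j = u) by (field; lra).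
    assert (u / y j <= 1) by (apply Rmult_le_reg_r with (y j); lra).
    assert (0 <= u / y j) by (apply Rmult_le_pos; [lra | left; apply Rinv_0_lt_compat; lra]).
    split; intros i Hi; pose proof (Hy i ltac:(lia)).
    + specialize (Hle i Hi). unfold Rmin; destruct (Rle_dec _ _); nra.
    + specialize (Hge i Hi). unfold Rmin; destruct (Rle_dec _ _); nra.
Qed.

Lemma clip_above_split y n j u : (1 <= j <= n)%nat -> sorted_on n y ->
  (forall i, (1 <= i <= n)%nat -> 0 < y i) ->
  exists rho, (forall i, (1 <= i <= j)%nat -> rho * y i <= Rmax (y i) u) /\
              (forall i, (j < i <= n)%nat -> Rmax (y i) u <= rho * y i).
Proof.
  intros Hj Hs Hy. pose proof (Hy j Hj) as Hyj.
  assert (Hle : forall i, (1 <= i <= j)%nat -> y i <= y j) by (intros; apply (sorted_on_le n); auto; lia).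
  assert (Hge : forall i, (j < i <= n)%nat -> y j <= y i) by (intros; apply (sorted_on_le n); auto; lia).
  destruct (Rle_dec u (y j)).
  - exists 1. split; intros i Hi; pose proof (Hy i ltac:(lia)).
    + unfold Rmax; destruct (Rle_dec _ _); lra.
    + specialize (Hge i Hi). unfold Rmax; destruct (Rle_dec _ _); lra.
  - exists (u / y j). assert (Hr : u / y j * y j = u) by (field; lra).
    assert (1 <= u / y j) by (apply Rmult_le_reg_r with (y j); lra).
    split; intros i Hi; pose proof (Hy i ltac:(lia)).
    + specialize (Hle i Hi). unfold Rmax; destruct (Rle_dec _ _); nra.
    + specialize (Hge i Hi). unfold Rmax; destruct (Rle_dec _ _); nra.
Qed.

Definition clipping (n : nat) (y V : nat -> R) : Prop :=
  exists u, 0 <= u /\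
    ((forall i, (1 <= i <= n)%nat -> V i = Rmin (y i) u) \/
     (forall i, (1 <= i <= n)%nat -> V i = Rmax (y i) u)).

(* In ratio form: psi_j (V / |V|) >= psi_j (y / |y|). *)
Lemma clipping_psum_ratio n y V j : clipping n y V -> (1 <= j <= n)%nat -> sorted_on n y ->
  (forall i, (1 <= i <= n)%nat -> 0 < y i) -> psum y j * psum V n <= psum V j * psum y n.
Proof.
  intros [u [Hu [HV|HV]]] Hj Hs Hy.
  - destruct (clip_below_split y n j u Hj Hs Hy Hu) as [rho [H1 H2]].
    apply (psum_ratio_of_split _ _ _ _ rho Hj).
    + intros; rewrite HV by lia; auto.
    + intros; rewrite HV by lia; auto.
    + intros; apply Rlt_le, Hy; assumption.
  - destruct (clip_above_split y n j u Hj Hs Hy) as [rho [H1 H2]].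
    apply (psum_ratio_of_split _ _ _ _ rho Hj).
    + intros; rewrite HV by lia; auto.
    + intros; rewrite HV by lia; auto.
    + intros; apply Rlt_le, Hy; assumption.
Qed.

(** * The construction *)

Section Construction.

Variables (n : nat) (X : nat -> nat -> R).
Hypothesis hn : (2 <= n)%nat.
Hypothesis HX : forall k, in_Delta_bar n (X k).

(* [X k] is perturbed into a strictly increasing positive vector, so that every phase below moves
   its block by a positive amount, and rescaled to [target k], whose first coordinate is
   [2 * scale k]; hence [scale] at least doubles from one cycle to the next. *)
Definition weight (i : nat) : R := INR i / (INR n * INR n).
Definition shrink (k : nat) : R := / (INR k + 2).
Definition perturbed (k i : nat) : R := X k i + shrink k * weight i.
Definition profile (k i : nat) : R := 2 * perturbed k i / perturbed k 1.
Fixpoint scale (k : nat) : R :=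
  match k with O => / INR n | S k' => scale k' * profile k' n end.
Definition target (k i : nat) : R := scale k * profile k i.

Lemma X_nonneg k i : (1 <= i <= n)%nat -> 0 <= X k i.
Proof.
  intros Hi. destruct (HX k) as [H0 [Hs _]].
  apply Rle_trans with (X k 1%nat); [exact H0 | apply (sorted_on_le n); auto; lia].
Qed.

Lemma shrink_pos k : 0 < shrink k.
Proof. unfold shrink. apply Rinv_0_lt_compat. pose proof (pos_INR k). lra. Qed.

Lemma shrink_le k : shrink k <= / (INR k + 1).
Proof. unfold shrink. pose proof (pos_INR k). apply Rinv_le_contravar; lra. Qed.

Lemma psum_weight_bounds j : (j <= n)%nat -> 0 <= psum weight j <= 1.
Proof.
  intros Hj. assert (0 < INR n) by (apply INR_pos; lia).
  rewrite (psum_ext _ (fun i => / (INR n * INR n) * INR i)) by (intros; unfold weight, Rdiv; ring).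
  rewrite psum_scal.
  assert (0 <= psum INR j) by (apply psum_nonneg; intros; apply pos_INR).
  assert (psum INR j <= INR j * INR n) by (rewrite <- psum_const; apply psum_le; intros; apply le_INR; lia).
  assert (INR j <= INR n) by (apply le_INR; lia).
  assert (0 < / (INR n * INR n)) by (apply Rinv_0_lt_compat; nra).
  split; [apply Rmult_le_pos; lra|].
  apply Rle_trans with (/ (INR n * INR n) * (INR n * INR n)).
  - apply Rmult_le_compat_l; nra.
  - rewrite Rinv_l; [lra | nra].
Qed.

Lemma perturbed_incr k i : (1 <= i < n)%nat -> perturbed k i < perturbed k (S i).
Proof.
  intros Hi. unfold perturbed. destruct (HX k) as [_ [Hs _]]. pose proof (Hs i Hi).
  assert (weight i < weight (S i)).
  { unfold weight. rewrite S_INR. assert (0 < INR n) by (apply INR_pos; lia).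
    apply Rmult_lt_compat_r; [apply Rinv_0_lt_compat; nra | lra]. }
  pose proof (shrink_pos k). nra.
Qed.

Lemma perturbed_1_pos k : 0 < perturbed k 1.
Proof.
  unfold perturbed. pose proof (X_nonneg k 1 ltac:(lia)). pose proof (shrink_pos k).
  assert (0 < weight 1) by (unfold weight; assert (0 < INR n) by (apply INR_pos; lia);
                            apply Rdiv_lt_0_compat; simpl; nra).
  nra.
Qed.

Lemma profile_1 k : profile k 1 = 2.
Proof. unfold profile. pose proof (perturbed_1_pos k). field. lra. Qed.

Lemma scale_pos k : 0 < scale k.
Proof.
  induction k as [|k IH]; simpl; [apply Rinv_0_lt_compat, INR_pos; lia|].
  assert (2 < profile k n); [|nra].
  rewrite <- (profile_1 k). apply (strictly_sorted_lt n (profile k)); [|lia|lia].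
  intros i Hi. unfold profile. pose proof (perturbed_1_pos k). pose proof (perturbed_incr k i Hi).
  apply Rmult_lt_compat_r; [apply Rinv_0_lt_compat|]; lra.
Qed.

Lemma target_incr k i : (1 <= i < n)%nat -> target k i < target k (S i).
Proof.
  intros Hi. unfold target, profile. pose proof (scale_pos k). pose proof (perturbed_1_pos k).
  pose proof (perturbed_incr k i Hi).
  apply Rmult_lt_compat_l; [lra|]. apply Rmult_lt_compat_r; [apply Rinv_0_lt_compat|]; lra.
Qed.

Lemma target_lt k i i' : (1 <= i < i')%nat -> (i' <= n)%nat -> target k i < target k i'.
Proof. intros. apply (strictly_sorted_lt n); auto. apply target_incr. Qed.

Lemma target_le k i i' : (1 <= i <= i')%nat -> (i' <= n)%nat -> target k i <= target k i'.
Proof. intros. destruct (Nat.eq_dec i i') as [->|]; [lra|]. apply Rlt_le, target_lt; lia. Qed.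

Lemma target_sorted k : sorted_on n (target k).
Proof. intros i Hi. apply target_le; lia. Qed.

Lemma scale_lt_target k i : (1 <= i <= n)%nat -> scale k < target k i.
Proof.
  intros Hi. pose proof (scale_pos k). pose proof (target_le k 1 i ltac:(lia) ltac:(lia)) as Hle.
  unfold target at 1 in Hle. rewrite profile_1 in Hle. lra.
Qed.

Lemma target_pos k i : (1 <= i <= n)%nat -> 0 < target k i.
Proof. intros. pose proof (scale_pos k). pose proof (scale_lt_target k i H). lra. Qed.

Lemma scale_S k : scale (S k) = target k n.
Proof. reflexivity. Qed.

Lemma scale_lower_bound k : INR k + 1 <= INR n * scale k.
Proof.
  assert (0 < INR n) by (apply INR_pos; lia).
  induction k as [|k IH].
  - simpl. rewrite Rinv_r; lra.
  - rewrite scale_S, S_INR. pose proof (pos_INR k).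
    assert (2 * scale k <= target k n).
    { replace (2 * scale k) with (target k 1) by (unfold target; rewrite profile_1; ring).
      apply target_le; lia. }
    nra.
Qed.

Definition cycle_len : nat := (2 * n - 1)%nat.
Definition cycle_of (m : nat) : nat := (m / cycle_len)%nat.
Definition phase_of (m : nat) : nat := (m mod cycle_len)%nat.

(* Cycle [k] has [2n-1] phases and runs from the diagonal point of height [scale k] through
   [target k] (at phase [n]) to the diagonal point of height [scale (S k) = target k n].
   Phase [r < n] raises the coordinates [r+1..n] together up to [target k (r+1)]; phase
   [n <= r < 2n-1] raises the coordinates [1..r-n+1] together up to [target k (r-n+2)]. *)
Definition level (k r : nat) : R := if Nat.eqb r 0 then scale k else target k r.
Definition vertex (m i : nat) : R :=
  let k := cycle_of m in let r := phase_of m in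
  if Nat.ltb r n then Rmin (target k i) (level k r) else Rmax (target k i) (target k (r - n + 1)).
Definition block_lo (m : nat) : nat := if Nat.ltb (phase_of m) n then (phase_of m + 1)%nat else 1%nat.
Definition block_hi (m : nat) : nat := if Nat.ltb (phase_of m) n then n else (phase_of m - n + 1)%nat.

Lemma phase_lt m : (phase_of m < cycle_len)%nat.
Proof. apply Nat.mod_upper_bound. unfold cycle_len. lia. Qed.

Lemma cycle_phase_eq m k r : (r < cycle_len)%nat -> m = (cycle_len * k + r)%nat ->
  cycle_of m = k /\ phase_of m = r.
Proof.
  intros Hr ->. unfold cycle_of, phase_of. split.
  - symmetry. apply (Nat.div_unique _ _ _ r); [exact Hr | reflexivity].
  - symmetry. apply (Nat.mod_unique _ _ k); [exact Hr | reflexivity].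
Qed.

Lemma cycle_start k : cycle_of (cycle_len * k) = k /\ phase_of (cycle_len * k) = 0%nat.
Proof. apply cycle_phase_eq; unfold cycle_len; lia. Qed.

Lemma phase_succ_cases m :
  let k := cycle_of m in let r := phase_of m in
  (S r < n /\ cycle_of (S m) = k /\ phase_of (S m) = S r)%nat \/
  (S r = n /\ cycle_of (S m) = k /\ phase_of (S m) = n)%nat \/
  (n <= r /\ S r < cycle_len /\ cycle_of (S m) = k /\ phase_of (S m) = S r)%nat \/
  (S r = cycle_len /\ cycle_of (S m) = S k /\ phase_of (S m) = 0)%nat.
Proof.
  intros k r. pose proof (phase_lt m) as Hr. fold r in Hr.
  assert (Hm : m = (cycle_len * k + r)%nat) by apply Nat.div_mod_eq.
  destruct (Nat.eq_dec (S r) cycle_len) as [Hl|Hl].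
  - right; right; right. split; [exact Hl|]. apply cycle_phase_eq; unfold cycle_len in *; lia.
  - destruct (cycle_phase_eq (S m) k (S r)) as [Hk Hr']; [lia | lia|].
    destruct (Nat.lt_ge_cases (S r) n); [left; auto|].
    destruct (Nat.eq_dec (S r) n) as [Hn|Hn]; [right; left; rewrite Hr'; auto|].
    right; right; left. repeat split; auto; lia.
Qed.

Lemma vertex_raise_top m i : (phase_of m < n)%nat ->
  vertex m i = Rmin (target (cycle_of m) i) (level (cycle_of m) (phase_of m)).
Proof. intros H. unfold vertex. now rewrite (proj2 (Nat.ltb_lt _ _) H). Qed.

Lemma vertex_raise_bottom m i : (n <= phase_of m)%nat ->
  vertex m i = Rmax (target (cycle_of m) i) (target (cycle_of m) (phase_of m - n + 1)).
Proof. intros H. unfold vertex. now rewrite (proj2 (Nat.ltb_ge _ _) H). Qed.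

Lemma block_raise_top m : (phase_of m < n)%nat -> block_lo m = (phase_of m + 1)%nat /\ block_hi m = n.
Proof. intros H. unfold block_lo, block_hi. now rewrite (proj2 (Nat.ltb_lt _ _) H). Qed.

Lemma block_raise_bottom m : (n <= phase_of m)%nat -> block_lo m = 1%nat /\ block_hi m = (phase_of m - n + 1)%nat.
Proof. intros H. unfold block_lo, block_hi. now rewrite (proj2 (Nat.ltb_ge _ _) H). Qed.

Lemma level_lt_target k r i : (r < i <= n)%nat -> level k r < target k i.
Proof.
  intros. unfold level. destruct (Nat.eqb_spec r 0); [apply scale_lt_target | apply target_lt]; lia.
Qed.

Lemma target_le_level k r i : (1 <= i <= r)%nat -> (r <= n)%nat -> target k i <= level k r.
Proof. intros. unfold level. destruct (Nat.eqb_spec r 0); [lia | apply target_le; lia]. Qed.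

Lemma level_S k r : level k (S r) = target k (S r).
Proof. reflexivity. Qed.

Lemma level_pos k r : (r <= n)%nat -> 0 < level k r.
Proof.
  intros. unfold level. destruct (Nat.eqb_spec r 0); [apply scale_pos | apply target_pos; lia].
Qed.

Lemma vertex_cycle_start k i : (1 <= i <= n)%nat -> vertex (cycle_len * k) i = scale k.
Proof.
  intros Hi. destruct (cycle_start k) as [Hk Hr].
  rewrite vertex_raise_top by lia. rewrite Hk, Hr. apply Rmin_right.
  apply Rlt_le, scale_lt_target, Hi.
Qed.

Lemma vertex_at_target k i : (1 <= i <= n)%nat -> vertex (cycle_len * k + n) i = target k i.
Proof.
  intros Hi. destruct (cycle_phase_eq (cycle_len * k + n) k n) as [Hk Hr];
    [unfold cycle_len; lia | reflexivity|].
  rewrite vertex_raise_bottom by lia. rewrite Hk, Hr. replace (n - n + 1)%nat with 1%nat by lia.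
  apply Rmax_left, target_le; lia.
Qed.

Lemma vtime_cycle_start k : vtime n vertex (cycle_len * k) = INR n * scale k.
Proof.
  unfold vtime. rewrite (psum_ext _ (fun _ => scale k)) by (intros; apply vertex_cycle_start; lia).
  apply psum_const.
Qed.

Lemma construction_block m : (1 <= block_lo m <= block_hi m /\ block_hi m <= n)%nat.
Proof.
  pose proof (phase_lt m). unfold cycle_len in *. destruct (Nat.lt_ge_cases (phase_of m) n).
  - destruct (block_raise_top m) as [-> ->]; lia.
  - destruct (block_raise_bottom m) as [-> ->]; lia.
Qed.

Lemma construction_start : psum (vertex 0) n = 1.
Proof.
  pose proof (vtime_cycle_start 0) as H. unfold vtime in H. rewrite Nat.mul_0_r in H.
  rewrite H. simpl scale. rewrite Rinv_r; [reflexivity|]. apply Rgt_not_eq, INR_pos. lia.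
Qed.

Lemma construction_step m : exists v, v > 0 /\ forall i, (1 <= i <= n)%nat ->
  vertex (S m) i = vertex m i + v * block_ind (block_lo m) (block_hi m) i.
Proof.
  destruct (phase_succ_cases m) as [[Hr [Hk HS]]|[[Hr [Hk HS]]|[[Hr [Hr' [Hk HS]]]|[Hr [Hk HS]]]]];
    set (k := cycle_of m) in *; set (r := phase_of m) in *; unfold block_ind.
  - exists (target k (S r) - level k r). split; [pose proof (level_lt_target k r (S r) ltac:(lia)); lra|].
    destruct (block_raise_top m) as [-> ->]; [lia|]. fold r. intros i Hi.
    rewrite !vertex_raise_top by lia. rewrite Hk, HS, level_S. fold k r.
    destruct (in_block (r + 1) n i) eqn:E; [apply in_block_true in E | apply in_block_false in E].
    + rewrite Rmin_right by (apply target_le; lia).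
      rewrite Rmin_right by (apply Rlt_le, level_lt_target; lia). ring.
    + rewrite Rmin_left by (apply target_le; lia).
      rewrite Rmin_left by (apply target_le_level; lia). ring.
  - exists (target k n - target k (n - 1)). split; [pose proof (target_lt k (n - 1) n ltac:(lia) ltac:(lia)); lra|].
    destruct (block_raise_top m) as [-> ->]; [lia|]. fold r. intros i Hi.
    rewrite (vertex_raise_bottom (S m)), (vertex_raise_top m) by lia. rewrite Hk, HS. fold k r.
    replace (n - n + 1)%nat with 1%nat by lia. replace (r + 1)%nat with n by lia.
    unfold level. replace (Nat.eqb r 0) with false by (symmetry; apply Nat.eqb_neq; lia).
    replace r with (n - 1)%nat by lia. rewrite Rmax_left by (apply target_le; lia).
    destruct (in_block n n i) eqn:E; [apply in_block_true in E | apply in_block_false in E].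
    + replace i with n by lia. rewrite Rmin_right by (apply target_le; lia). ring.
    + rewrite Rmin_left by (apply target_le; lia). ring.
  - exists (target k (r - n + 2) - target k (r - n + 1)).
    split; [unfold cycle_len in *; pose proof (target_lt k (r - n + 1) (r - n + 2) ltac:(lia) ltac:(lia)); lra|].
    destruct (block_raise_bottom m) as [-> ->]; [lia|]. fold r. intros i Hi.
    rewrite !vertex_raise_bottom by lia. rewrite Hk, HS. fold k r.
    replace (S r - n + 1)%nat with (r - n + 2)%nat by lia. unfold cycle_len in *.
    destruct (in_block 1 (r - n + 1) i) eqn:E; [apply in_block_true in E | apply in_block_false in E].
    + rewrite !Rmax_right by (apply target_le; lia). ring.
    + rewrite !Rmax_left by (apply target_le; lia). ring.
  - exists (target k n - target k (n - 1)). split; [pose proof (target_lt k (n - 1) n ltac:(lia) ltac:(lia)); lra|].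
    destruct (block_raise_bottom m) as [-> ->]; [unfold cycle_len in *; lia|]. fold r. intros i Hi.
    rewrite (vertex_raise_bottom m), (vertex_raise_top (S m)) by (unfold cycle_len in *; lia). rewrite Hk, HS. fold k r.
    unfold level; simpl Nat.eqb; cbv iota. rewrite scale_S.
    rewrite Rmin_right by (rewrite <- scale_S; apply Rlt_le, scale_lt_target; lia).
    replace (r - n + 1)%nat with (n - 1)%nat by (unfold cycle_len in *; lia).
    destruct (in_block 1 (n - 1) i) eqn:E; [apply in_block_true in E | apply in_block_false in E].
    + rewrite Rmax_right by (apply target_le; lia). ring.
    + replace i with n by lia. rewrite Rmax_left by (apply target_le; lia). ring.
Qed.

Lemma construction_sorted m : 0 <= vertex m 1 /\ sorted_on n (vertex m).
Proof.
  set (k := cycle_of m). set (r := phase_of m). pose proof (target_pos k 1 ltac:(lia)).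
  split; [|intros i Hi; pose proof (target_le k i (S i) ltac:(lia) ltac:(lia))];
    (destruct (Nat.lt_ge_cases r n) as [Hr|Hr];
     [rewrite !vertex_raise_top by exact Hr | rewrite !vertex_raise_bottom by exact Hr]); fold k r.
  - pose proof (level_pos k r ltac:(lia)). unfold Rmin; destruct (Rle_dec _ _); lra.
  - unfold Rmax; destruct (Rle_dec _ _); lra.
  - unfold Rmin; destruct (Rle_dec _ _), (Rle_dec _ _); lra.
  - unfold Rmax; destruct (Rle_dec _ _), (Rle_dec _ _); lra.
Qed.

Lemma construction_block_flat m i : (block_lo m <= i <= block_hi m)%nat ->
  vertex m i = vertex m (block_lo m).
Proof.
  pose proof (phase_lt m). unfold cycle_len in *. destruct (Nat.lt_ge_cases (phase_of m) n) as [Hr|Hr].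
  - destruct (block_raise_top m Hr) as [-> ->]. intros Hi. rewrite !vertex_raise_top by exact Hr.
    rewrite !Rmin_right by (apply Rlt_le, level_lt_target; lia). reflexivity.
  - destruct (block_raise_bottom m Hr) as [-> ->]. intros Hi. rewrite !vertex_raise_bottom by exact Hr.
    rewrite !Rmax_right by (apply target_le; lia). reflexivity.
Qed.

Lemma construction_merge m : (block_lo m < block_hi (S m))%nat ->
  forall i, (block_lo m <= i <= block_hi (S m))%nat -> vertex (S m) i = vertex (S m) (block_lo m).
Proof.
  destruct (phase_succ_cases m) as [[Hr [Hk HS]]|[[Hr [Hk HS]]|[[Hr [Hr' [Hk HS]]]|[Hr [Hk HS]]]]];
    set (k := cycle_of m) in *; set (r := phase_of m) in *.
  - destruct (block_raise_top m) as [-> _]; [lia|]. destruct (block_raise_top (S m)) as [_ ->]; [lia|].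
    fold r. intros Hlt i Hi. rewrite !vertex_raise_top by lia. rewrite Hk, HS, level_S.
    rewrite !Rmin_right by (apply target_le; lia). reflexivity.
  - destruct (block_raise_top m) as [-> _]; [lia|]. destruct (block_raise_bottom (S m)) as [_ ->]; [lia|].
    rewrite HS. fold r. lia.
  - destruct (block_raise_bottom m) as [-> _]; [lia|]. destruct (block_raise_bottom (S m)) as [_ ->]; [lia|].
    rewrite HS. fold r. intros Hlt i Hi. rewrite !vertex_raise_bottom by lia. rewrite Hk, HS.
    unfold cycle_len in *. rewrite !Rmax_right by (apply target_le; lia). reflexivity.
  - destruct (block_raise_bottom m) as [-> _]; [unfold cycle_len in *; lia|].
    destruct (block_raise_top (S m)) as [_ ->]; [lia|].
    intros Hlt i Hi. rewrite !vertex_raise_top by lia. rewrite Hk, HS.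
    unfold level; simpl Nat.eqb; cbv iota.
    rewrite !Rmin_right by (apply Rlt_le, scale_lt_target; lia). reflexivity.
Qed.

Lemma construction_block_change m : exists i, (1 <= i <= n)%nat /\
  in_block (block_lo m) (block_hi m) i <> in_block (block_lo (S m)) (block_hi (S m)) i.
Proof.
  assert (Hdiff : forall i a b a' b', (1 <= i <= n)%nat -> (a <= i <= b)%nat -> ~ (a' <= i <= b')%nat ->
            exists i, (1 <= i <= n)%nat /\ in_block a b i <> in_block a' b' i).
  { intros i a b a' b' Hi H H'. exists i. split; [exact Hi|].
    apply in_block_true in H. apply in_block_false in H'. congruence. }
  destruct (phase_succ_cases m) as [[Hr [Hk HS]]|[[Hr [Hk HS]]|[[Hr [Hr' [Hk HS]]]|[Hr [Hk HS]]]]];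
    set (r := phase_of m) in *; unfold cycle_len in *.
  - destruct (block_raise_top m) as [-> ->]; [lia|]. destruct (block_raise_top (S m)) as [-> ->]; [lia|].
    apply (Hdiff (r + 1)%nat); rewrite ?HS; fold r; lia.
  - destruct (block_raise_top m) as [-> ->]; [lia|]. destruct (block_raise_bottom (S m)) as [-> ->]; [lia|].
    apply (Hdiff n); rewrite ?HS; fold r; lia.
  - destruct (block_raise_bottom m) as [-> ->]; [lia|]. destruct (block_raise_bottom (S m)) as [-> ->]; [lia|].
    destruct (Hdiff (r - n + 2)%nat 1%nat (S r - n + 1)%nat 1%nat (r - n + 1)%nat) as [i [Hi Hne]];
      [lia | lia | lia|].
    exists i. rewrite HS. fold r. split; [exact Hi | congruence].
  - destruct (block_raise_bottom m) as [-> ->]; [lia|]. destruct (block_raise_top (S m)) as [-> ->]; [lia|].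
    destruct (Hdiff n (0 + 1)%nat n 1%nat (r - n + 1)%nat) as [i [Hi Hne]]; [lia | lia | lia|].
    exists i. rewrite HS. fold r. split; [exact Hi | congruence].
Qed.

Lemma construction_unbounded M : exists m, psum (vertex m) n > M.
Proof.
  destruct (INR_archimed 1 M ltac:(lra)) as [k Hk]. exists (cycle_len * k)%nat.
  pose proof (vtime_cycle_start k) as H. unfold vtime in H. rewrite H.
  pose proof (scale_lower_bound k). lra.
Qed.

Lemma construction_vertex_path : vertex_path n vertex block_lo block_hi.
Proof.
  split.
  - exact construction_block.
  - exact construction_start.
  - exact construction_step.
  - exact construction_sorted.
  - exact construction_block_flat.
  - exact construction_merge.
  - exact construction_block_change.
  - exact construction_unbounded.
Qed.

Definition target_ratio (k j : nat) : R := psum (target k) j / psum (target k) n.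

Lemma psum_target_pos k : 0 < psum (target k) n.
Proof.
  apply Rlt_le_trans with (target k n); [apply target_pos; lia|].
  apply psum_term_le; [intros; apply Rlt_le, target_pos; lia | lia].
Qed.

Lemma target_ratio_le_clipping k V j : clipping n (target k) V -> (1 <= j <= n)%nat ->
  target_ratio k j * psum V n <= psum V j.
Proof.
  intros HV Hj. pose proof (clipping_psum_ratio n _ V j HV Hj (target_sorted k) (target_pos k)).
  pose proof (psum_target_pos k). unfold target_ratio.
  apply Rmult_le_reg_r with (psum (target k) n); [assumption|].
  replace (psum (target k) j / psum (target k) n * psum V n * psum (target k) n)
    with (psum (target k) j * psum V n) by (field; lra).
  lra.
Qed.

Lemma vertex_clipping m : clipping n (target (cycle_of m)) (vertex m).
Proof.
  destruct (Nat.lt_ge_cases (phase_of m) n) as [Hr|Hr].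
  - exists (level (cycle_of m) (phase_of m)). split; [apply Rlt_le, level_pos; lia|].
    left. intros; apply vertex_raise_top, Hr.
  - exists (target (cycle_of m) (phase_of m - n + 1)). pose proof (phase_lt m). unfold cycle_len in *.
    split; [apply Rlt_le, target_pos; lia|]. right. intros; apply vertex_raise_bottom, Hr.
Qed.

Lemma vertex_S_clipping m : clipping n (target (cycle_of m)) (vertex (S m)).
Proof.
  destruct (phase_succ_cases m) as [[_ [Hk _]]|[[_ [Hk _]]|[[_ [_ [Hk _]]]|[Hr [Hk HS]]]]];
    try (rewrite <- Hk; apply vertex_clipping).
  (* the first vertex of the next cycle is the constant vector [target k n] *)
  exists (target (cycle_of m) n). split; [apply Rlt_le, target_pos; lia|]. right. intros i Hi.
  rewrite vertex_raise_top by lia. rewrite Hk, HS. unfold level; simpl Nat.eqb; cbv iota.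
  rewrite scale_S, Rmin_right by (rewrite <- scale_S; apply Rlt_le, scale_lt_target; lia).
  rewrite Rmax_right by (apply target_le; lia). reflexivity.
Qed.

Definition path : nat -> R -> R := interp n vertex block_lo block_hi.

(* Along each piece, [psi_j] of the path stays above the ratio of the current target: it does so
   at both (clipped) ends, and both sides are affine in [t]. *)
Lemma path_above_target_ratio m j t : (1 <= j <= n)%nat ->
  vtime n vertex m <= t <= vtime n vertex (S m) ->
  target_ratio (cycle_of m) j * t <= psum (fun i => path i t) j.
Proof.
  intros Hj Ht. pose proof construction_vertex_path as HV.
  set (a := target_ratio (cycle_of m) j). set (s := psum (block_slope (block_lo m) (block_hi m)) j).
  set (T0 := vtime n vertex m) in *. set (T1 := vtime n vertex (S m)) in *.
  assert (H0 : a * T0 <= psum (vertex m) j) by apply (target_ratio_le_clipping _ _ j (vertex_clipping m) Hj).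
  assert (H1 : a * T1 <= psum (vertex (S m)) j)
    by apply (target_ratio_le_clipping _ _ j (vertex_S_clipping m) Hj).
  assert (Hend : psum (vertex (S m)) j = psum (vertex m) j + (T1 - T0) * s).
  { unfold s. rewrite <- psum_scal, <- psum_add. apply psum_ext. intros i Hi.
    apply (vertex_step _ _ _ _ HV). lia. }
  assert (Hpath : psum (fun i => path i t) j = psum (vertex m) j + (t - T0) * s).
  { unfold s. rewrite <- psum_scal, <- psum_add. apply psum_ext. intros i Hi.
    apply (interp_on_closed_piece _ _ _ _ HV); [lia | exact Ht]. }
  rewrite Hpath. destruct (Rle_dec a s).
  - assert (0 <= (t - T0) * (s - a)) by (apply Rmult_le_pos; lra). nra.
  - assert (0 <= (T1 - t) * (a - s)) by (apply Rmult_le_pos; lra). nra.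
Qed.

Lemma ratio_perturbation_bounds x wj wn d : 0 <= x <= 1 -> 0 <= wj <= 1 -> 0 <= wn <= 1 -> 0 <= d ->
  x - d <= (x + d * wj) / (1 + d * wn) <= x + d.
Proof.
  intros Hx Hwj Hwn Hd. assert (Hpos : 0 < 1 + d * wn) by nra.
  split; apply Rmult_le_reg_r with (1 + d * wn); try exact Hpos;
    unfold Rdiv; rewrite Rmult_assoc, Rinv_l by lra.
  - assert (0 <= d * (1 - x * wn)) by (apply Rmult_le_pos; nra). nra.
  - assert (0 <= d * (x * wn)) by (apply Rmult_le_pos; nra). nra.
Qed.

Lemma target_ratio_approx k j : (1 <= j <= n)%nat ->
  psum (X k) j - shrink k <= target_ratio k j <= psum (X k) j + shrink k.
Proof.
  intros Hj. destruct (HX k) as [_ [_ Hsum]].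
  assert (Hp : forall j', psum (target k) j' = scale k * 2 / perturbed k 1 * (psum (X k) j' + shrink k * psum weight j')).
  { intros j'. rewrite <- (psum_scal (shrink k) weight), <- psum_add, <- psum_scal.
    apply psum_ext. intros. unfold target, profile, perturbed. field.
    pose proof (perturbed_1_pos k). unfold perturbed in *. lra. }
  replace (target_ratio k j) with ((psum (X k) j + shrink k * psum weight j) / (1 + shrink k * psum weight n)).
  - apply ratio_perturbation_bounds.
    + split; [apply psum_nonneg; intros; apply X_nonneg; lia|].
      rewrite <- Hsum. apply psum_mono; [lia | intros; apply X_nonneg; lia].
    + apply psum_weight_bounds; lia.
    + apply psum_weight_bounds; lia.
    + apply Rlt_le, shrink_pos.
  - unfold target_ratio. rewrite !Hp, Hsum. pose proof (perturbed_1_pos k). pose proof (scale_pos k).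
    pose proof (shrink_pos k). pose proof (psum_weight_bounds n (le_n n)).
    field. repeat split; nra.
Qed.

Lemma path_at_cycle_start k j : (1 <= j <= n)%nat ->
  let q := vtime n vertex (cycle_len * k) in psi j (fun i => path i q / q) = INR j / INR n.
Proof.
  intros Hj q. pose proof (scale_pos k). assert (0 < INR n) by (apply INR_pos; lia).
  assert (Hq : q = INR n * scale k) by apply vtime_cycle_start.
  rewrite psi_scaled by nra. unfold path, q.
  rewrite (psum_ext _ (fun _ => scale k)).
  - rewrite psum_const. fold q. rewrite Hq. field. lra.
  - intros i Hi. rewrite interp_at_vertex by exact construction_vertex_path.
    apply vertex_cycle_start. lia.
Qed.

Lemma path_limsup j : (1 <= j <= n)%nat ->
  is_limsup_infty (fun q => psi j (fun i => path i q / q)) (INR j / INR n).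
Proof.
  intros Hj eps Heps. split.
  - exists 1. intros q Hq.
    destruct (interp_G1 _ _ _ _ construction_vertex_path q ltac:(lra)) as [_ [Hs Hsum]].
    rewrite psi_scaled by lra. pose proof (sorted_psum_ratio_le _ n j Hs Hj) as Hle.
    unfold path. rewrite Hsum in Hle. specialize (Hle ltac:(lra)). lra.
  - intros Q. destruct (INR_archimed 1 Q ltac:(lra)) as [k Hk].
    exists (vtime n vertex (cycle_len * k)). rewrite path_at_cycle_start by exact Hj.
    split; [|lra]. rewrite vtime_cycle_start. pose proof (scale_lower_bound k). lra.
Qed.

Lemma path_liminf_lower j : (1 <= j <= n)%nat -> forall K, exists Q, forall q, q >= Q ->
  exists k, (K <= k)%nat /\ psi j (X k) - / (INR k + 1) <= psi j (fun i => path i q / q).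
Proof.
  intros Hj K. pose proof construction_vertex_path as HV.
  exists (vtime n vertex (cycle_len * K)). intros q Hq.
  assert (HQ : 1 <= vtime n vertex (cycle_len * K)) by apply (vtime_ge_1 _ _ _ _ HV).
  destruct (piece_index_spec _ _ _ _ HV q ltac:(lra)) as [Hm1 Hm2].
  set (m := piece_index n vertex q) in *.
  assert (Hm : (cycle_len * K <= m)%nat).
  { destruct (Nat.lt_ge_cases m (cycle_len * K)) as [Hlt|]; [|assumption].
    pose proof (vtime_le _ _ _ _ HV (S m) (cycle_len * K) Hlt). lra. }
  exists (cycle_of m). split.
  - rewrite <- (proj1 (cycle_start K)). apply Nat.Div0.div_le_mono, Hm.
  - pose proof (path_above_target_ratio m j q Hj ltac:(lra)).
    pose proof (target_ratio_approx (cycle_of m) j Hj). pose proof (shrink_le (cycle_of m)).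
    rewrite psi_scaled by lra. unfold psi.
    apply Rle_trans with (target_ratio (cycle_of m) j); [lra|].
    apply Rmult_le_reg_r with q; [lra|]. unfold Rdiv. rewrite Rmult_assoc, Rinv_l by lra. lra.
Qed.

Lemma path_liminf_upper j : (1 <= j <= n)%nat -> forall k, exists q,
  q >= INR k /\ psi j (fun i => path i q / q) <= psi j (X k) + / (INR k + 1).
Proof.
  intros Hj k. pose proof construction_vertex_path as HV.
  set (q := vtime n vertex (cycle_len * k + n)). exists q.
  assert (Hq : INR k + 1 <= q).
  { pose proof (vtime_le _ _ _ _ HV (cycle_len * k) (cycle_len * k + n) ltac:(lia)) as Hle.
    rewrite vtime_cycle_start in Hle. pose proof (scale_lower_bound k). unfold q. lra. }
  pose proof (pos_INR k). split; [lra|].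
  assert (Hat : forall i, (1 <= i <= n)%nat -> path i q = target k i).
  { intros i Hi. unfold path, q. rewrite (interp_at_vertex _ _ _ _ HV). apply vertex_at_target, Hi. }
  assert (Hqs : q = psum (target k) n) by (apply psum_ext; intros; apply vertex_at_target; lia).
  rewrite psi_scaled by lra. rewrite (psum_ext _ (target k)) by (intros; apply Hat; lia).
  rewrite Hqs. fold (target_ratio k j).
  pose proof (target_ratio_approx k j Hj). pose proof (shrink_le k). unfold psi. lra.
Qed.

End Construction.

(** * Sampling the infima *)

Lemma inv_INR_S_lt eps : eps > 0 -> exists N, forall k, (N <= k)%nat -> / (INR k + 1) < eps.
Proof.
  intros Heps. destruct (INR_archimed eps 1 Heps) as [N HN]. exists N. intros k Hk.
  pose proof (le_INR _ _ Hk). pose proof (pos_INR N).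
  apply Rmult_lt_reg_r with (INR k + 1); [lra|]. rewrite Rinv_l by lra. nra.
Qed.

Lemma liminf_of_samples (f : R -> R) (x : nat -> R) m :
  (forall k, m <= x k) ->
  (forall N, exists k, (N <= k)%nat /\ x k <= m + / (INR N + 1)) ->
  (forall K, exists Q, forall q, q >= Q -> exists k, (K <= k)%nat /\ x k - / (INR k + 1) <= f q) ->
  (forall k, exists q, q >= INR k /\ f q <= x k + / (INR k + 1)) ->
  is_liminf_infty f m.
Proof.
  intros Hlow Hnear Hbelow Habove eps Heps. split.
  - destruct (inv_INR_S_lt eps Heps) as [K HK]. destruct (Hbelow K) as [Q HQ]. exists Q.
    intros q Hq. destruct (HQ q Hq) as [k [Hk Hf]]. specialize (HK k Hk). specialize (Hlow k). lra.
  - intros Q. destruct (inv_INR_S_lt (eps / 2) ltac:(lra)) as [N1 HN1].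
    destruct (INR_archimed 1 Q ltac:(lra)) as [N2 HN2].
    destruct (Hnear (N1 + N2)%nat) as [k [Hk Hxk]]. destruct (Habove k) as [q [Hq Hfq]].
    exists q. split.
    + pose proof (le_INR N2 k ltac:(lia)). lra.
    + pose proof (HN1 (N1 + N2)%nat ltac:(lia)). pose proof (HN1 k ltac:(lia)). lra.
Qed.

Definition near_minimizer (E : (nat -> R) -> Prop) (j : nat) (eps : R) (x : nat -> R) : Prop :=
  E x /\ forall x', E x' -> psi j x <= psi j x' + eps.

Lemma near_minimizer_exists E j eps m : eps > 0 ->
  is_inf (fun y => exists x, E x /\ y = psi j x) m -> exists x, near_minimizer E j eps x.
Proof.
  intros Heps [Hlb Hglb]. apply NNPP. intros Hno.
  assert (m + eps <= m); [|lra].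
  apply Hglb. intros y [x [Hx ->]]. apply Rnot_lt_le. intros Hlt. apply Hno.
  exists x. split; [exact Hx|]. intros x' Hx'.
  assert (m <= psi j x') by (apply Hlb; exists x'; auto). lra.
Qed.

(* Index [k] is devoted to [j = k mod n + 1] with precision [1/(k/n + 1)]; near-minimality is
   only required when a near-minimiser exists, so that [good k] is always inhabited. *)
Lemma exists_sampling_sequence n E : (1 <= n)%nat -> (exists x, E x) ->
  exists X : nat -> nat -> R, (forall k, E (X k)) /\
    forall j m, (1 <= j <= n)%nat -> is_inf (fun y => exists x, E x /\ y = psi j x) m ->
    forall N, exists k, (N <= k)%nat /\ psi j (X k) <= m + / (INR N + 1).
Proof.
  intros Hn [x0 Hx0].
  set (good k x := E x /\ ((exists x', near_minimizer E (k mod n + 1) (/ (INR (k / n) + 1)) x') ->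
                           near_minimizer E (k mod n + 1) (/ (INR (k / n) + 1)) x)).
  assert (Hgood : forall k, exists x, good k x).
  { intros k. destruct (classic (exists x', near_minimizer E (k mod n + 1) (/ (INR (k / n) + 1)) x'))
      as [[x Hx]|Hno].
    - exists x. split; [apply Hx | auto].
    - exists x0. split; [exact Hx0 | intros H; contradiction]. }
  exists (fun k => epsilon (inhabits x0) (good k)).
  assert (HX : forall k, good k (epsilon (inhabits x0) (good k))) by (intros; apply epsilon_spec, Hgood).
  split; [intros k; apply (proj1 (HX k))|].
  intros j m Hj Hinf N. set (k := (n * N + (j - 1))%nat).
  assert (Hkn : (k / n = N)%nat) by (symmetry; apply (Nat.div_unique _ _ _ (j - 1)); unfold k; lia).
  assert (Hkj : (k mod n + 1 = j)%nat).
  { enough ((j - 1) = k mod n)%nat by lia. apply (Nat.mod_unique k n N (j - 1)); unfold k; lia. }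
  exists k. split; [unfold k; nia|].
  destruct (HX k) as [_ Hnear]. rewrite Hkn, Hkj in Hnear.
  assert (Heps : / (INR N + 1) > 0) by (apply Rinv_0_lt_compat; pose proof (pos_INR N); lra).
  destruct (Hnear (near_minimizer_exists E j _ m Heps Hinf)) as [HE Hmin].
  destruct Hinf as [_ Hglb].
  assert (psi j (epsilon (inhabits x0) (good k)) - / (INR N + 1) <= m); [|lra].
  apply Hglb. intros y [x [Hx ->]]. specialize (Hmin x Hx). lra.
Qed.

Theorem mainTheorem10 (n : nat) (E : (nat -> R) -> Prop)
  (hn : (2 <= n)%nat)
  (hE : forall x, E x -> in_Delta_bar n x)
  (hne : exists x, E x) :
  exists P : nat -> R -> R,
    gen_n_system n 1 P /\
    forall j, (1 <= j <= n)%nat ->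
      (forall m, is_inf (fun y => exists x, E x /\ y = psi j x) m ->
         is_liminf_infty (fun q => psi j (fun i => P i q / q)) m) /\
      is_limsup_infty (fun q => psi j (fun i => P i q / q)) (INR j / INR n).
Proof.
  destruct (exists_sampling_sequence n E ltac:(lia) hne) as [X [HXE Hnear]].
  assert (HX : forall k, in_Delta_bar n (X k)) by (intros k; apply hE, HXE).
  exists (path n X). split.
  - apply interp_gen_n_system, construction_vertex_path; assumption.
  - intros j Hj. split.
    + intros m Hinf. apply (liminf_of_samples _ (fun k => psi j (X k))).
      * intros k. apply (proj1 Hinf). exists (X k). auto.
      * exact (Hnear j m Hj Hinf).
      * apply path_liminf_lower; assumption.
      * apply path_liminf_upper; assumption.
    + apply path_limsup; assumption.
Qed.
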